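(* For non-negative integers $n,k,\alpha,\beta$, $$\genfrac{\lfloor}{\rfloor}{0pt}{}{n+k}{n}^{\alpha,\beta}=\sum_{1\le i_1\le i_2\le\cdots\le i_k\le n}\ \prod_{j=1}^{k}\big((\alpha+\beta)i_j+\alpha(j-1)\big)=\sum_{1\le i_1\le\cdots\le i_k\le n}(\alpha+\beta)i_1\big((\alpha+\beta)i_2+\alpha\big)\cdots\big((\alpha+\beta)i_k+\alpha(k-1)\big).$$
   Context: For parameters $\alpha,\beta$, the generalized Stirling numbers $\genfrac{\lfloor}{\rfloor}{0pt}{}{n}{k}^{\alpha,\beta}$, $0\le k\le n$, are defined by the polynomial identity in $x$ $$x(x+\alpha)\cdots(x+(n-1)\alpha)=\sum_{k=0}^{n}\genfrac{\lfloor}{\rfloor}{0pt}{}{n}{k}^{\alpha,\beta}\,x(x-\beta)\cdots(x-(k-1)\beta),$$ (empty products equal $1$), and $\genfrac{\lfloor}{\rfloor}{0pt}{}{n}{k}^{\alpha,\beta}=0$ for $k<0$ or $k>n$. An empty sum is $0$ and an empty product is $1$ (so for $k=0$ the right-hand side equals $1$). *)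

From HB Require Import structures.
From mathcomp Require Import all_boot all_order all_algebra.
Set Implicit Arguments. Unset Strict Implicit. Unset Printing Implicit Defensive.
Import Order.TTheory GRing.Theory Num.Theory.
Local Open Scope ring_scope.

(* [is_gen_stirling a b S] : S n k are the generalized Stirling numbers with
   parameters alpha = a, beta = b, i.e. for every n the polynomial identity
   x(x+a)...(x+(n-1)a) = sum_{k=0}^n S n k * x(x-b)...(x-(k-1)b)
   holds in Z[x], and S n k = 0 for k > n. *)
Definition is_gen_stirling (a b : int) (S : nat -> nat -> int) : Prop :=
  (forall n : nat,
     \prod_(i < n) ('X + (a *+ i)%:P) =
     \sum_(k < n.+1) (S n k)%:P * \prod_(i < k) ('X - (b *+ i)%:P) :> {poly int})
  /\ (forall n k : nat, (n < k)%N -> S n k = 0).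

From HB Require Import structures.
From mathcomp Require Import all_boot all_order all_algebra.
From mathcomp Require Import ring zify.
Set Implicit Arguments. Unset Strict Implicit. Unset Printing Implicit Defensive.
Import Order.TTheory GRing.Theory Num.Theory.
Local Open Scope ring_scope.

(* Expanding x(x+a)...(x+ma) = (x+ma) * x(x+a)...(x+(m-1)a) in the basis
   P_j = x(x-b)...(x-(j-1)b), with (x+ma) P_j = P_(j+1) + (bj+am) P_j, gives the
   triangular recurrence S(m+1,j) = S(m,j-1) + (bj+am) S(m,j), S(m,m) = 1.
   Unfolding it along the diagonal k = m - j expresses S(v+k+1,v) as the sum over
   1 <= u <= v of ((a+b)u + ak) S(u+k,u), which is exactly how the sum over
   nondecreasing sequences i_1 <= ... <= i_(k+1) <= v decomposes according to
   the last entry u = i_(k+1). *)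

Section FallingPoly.
Variable R : nzRingType.
Implicit Types (b : R) (c : nat -> R).

Definition falling_poly b (k : nat) : {poly R} :=
  \prod_(i < k) ('X - (b *+ i)%:P).

Lemma falling_poly_monic b k : falling_poly b k \is monic.
Proof. exact: monic_prod_XsubC. Qed.

Lemma size_falling_poly b k : size (falling_poly b k) = k.+1.
Proof. by rewrite size_prod_XsubC /index_enum -enumT size_enum_ord. Qed.

Lemma falling_polyS b k :
  falling_poly b k.+1 = falling_poly b k * ('X - (b *+ k)%:P).
Proof. by rewrite /falling_poly big_ord_recr. Qed.

Lemma coef_falling_poly_size b k : (falling_poly b k)`_k = 1.
Proof.
by have /monicP := falling_poly_monic b k; rewrite /lead_coef size_falling_poly.
Qed.

Lemma falling_poly_free b m c :
  \sum_(k < m) (c k)%:P * falling_poly b k = 0 -> forall k, (k < m)%N -> c k = 0.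
Proof.
elim: m => [|m IH] // Hsum.
have cm : c m = 0.
  have := congr1 (fun p : {poly R} => p`_m) Hsum.
  rewrite big_ord_recr /= coefD coef_sum coef0 coefCM coef_falling_poly_size mulr1.
  rewrite big1 ?add0r // => i _.
  by rewrite coefCM nth_default ?mulr0 // size_falling_poly.
move=> k; rewrite ltnS leq_eqVlt => /predU1P [-> //|].
by apply: IH; move: Hsum; rewrite big_ord_recr /= cm mul0r addr0.
Qed.

End FallingPoly.

Section GenStirlingRecurrence.
Variables (a b : int) (S : nat -> nat -> int).
Hypothesis HS : is_gen_stirling a b S.

Lemma gen_stirlingS m j :
  S m.+1 j = (if j is j'.+1 then S m j' else 0) + (b *+ j + a *+ m) * S m j.
Proof.
have [Hexp Hzero] := HS.
pose c j := S m.+1 j - ((if j is j'.+1 then S m j' else 0) + (b *+ j + a *+ m) * S m j).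
suff Hc : \sum_(k < m.+2) (c k)%:P * falling_poly b k = 0.
  have [hj|] := ltnP j m.+2.
    by apply/eqP; rewrite -subr_eq0; apply/eqP; exact: falling_poly_free Hc j hj.
  case: j => [//|j] hj.
  by rewrite !Hzero ?mulr0 ?addr0 // ltnW.
have Hshift : \sum_(k < m.+2) (S m.+1 k)%:P * falling_poly b k =
   \sum_(k < m.+1) (S m k)%:P * falling_poly b k.+1 +
   \sum_(k < m.+1) ((b *+ k + a *+ m) * S m k)%:P * falling_poly b k.
  rewrite -Hexp big_ord_recr /= Hexp big_distrl /= -big_split /=.
  apply: eq_bigr => k _.
  by rewrite falling_polyS polyCM -/(falling_poly b k) polyCD; ring.
under eq_bigr do rewrite polyCB polyCD mulrBl mulrDl.
rewrite sumrB big_split /= Hshift [X in _ - (X + _)]big_ord_recl /= mul0r add0r.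
by rewrite [X in _ - (_ + X)]big_ord_recr /= (Hzero m m.+1) // mulr0 mul0r addr0 subrr.
Qed.

Lemma gen_stirling_diag m : S m m = 1.
Proof.
elim: m => [|m IH].
  have := congr1 (fun p : {poly int} => p`_0) (HS.1 0%N).
  by rewrite big_ord0 big_ord1 big_ord0 mulr1 !coefC.
by rewrite gen_stirlingS IH HS.2 // mulr0 addr0.
Qed.

Lemma gen_stirlingS0 m : S m.+1 0 = 0.
Proof.
elim: m => [|m IH]; rewrite gen_stirlingS.
  by rewrite !mulr0n !add0r mul0r.
by rewrite IH mulr0 add0r.
Qed.

End GenStirlingRecurrence.

Section FfunRcons.
Variables (T : Type) (k : nat).
Implicit Types (u : T) (f : {ffun 'I_k -> T}).

Definition ffun_rcons u f : {ffun 'I_k.+1 -> T} :=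
  [ffun j => if unlift ord_max j is Some j' then f j' else u].

Lemma ffun_rcons_max u f : ffun_rcons u f ord_max = u.
Proof. by rewrite ffunE unlift_none. Qed.

Lemma ffun_rcons_lift u f j : ffun_rcons u f (lift ord_max j) = f j.
Proof. by rewrite ffunE liftK. Qed.

Lemma ffun_rcons_bij : bijective (fun p : T * {ffun 'I_k -> T} => ffun_rcons p.1 p.2).
Proof.
exists (fun g : {ffun 'I_k.+1 -> T} => (g ord_max, [ffun j : 'I_k => g (lift ord_max j)])).
  move=> [u f]; rewrite /= ffun_rcons_max; congr pair.
  by apply/ffunP => j; rewrite ffunE ffun_rcons_lift.
move=> g; apply/ffunP => j; rewrite ffunE /=.
by case: unliftP => [j' ->|->]; rewrite ?ffunE.
Qed.

Lemma forall_ffun_rcons (P : pred T) u f :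
  [forall j, P (ffun_rcons u f j)] = [forall j, P (f j)] && P u.
Proof.
apply/forallP/andP => [H|[/forallP Hf Hu] j].
  by split; [apply/forallP => j; rewrite -(ffun_rcons_lift u) | rewrite -(ffun_rcons_max u f)].
by case: (unliftP ord_max j) => [j' ->|->]; rewrite ?ffun_rcons_lift ?ffun_rcons_max.
Qed.

End FfunRcons.

Definition nondecreasing_ffun {k N : nat} (f : {ffun 'I_k -> 'I_N}) : bool :=
  [forall i : 'I_k, forall j : 'I_k, (i <= j)%N ==> (f i <= f j)%N].

Lemma nondecreasing_ffun_rcons k N (u : 'I_N) (f : {ffun 'I_k -> 'I_N}) :
  nondecreasing_ffun (ffun_rcons u f) = nondecreasing_ffun f && [forall j, (f j <= u)%N].
Proof.
apply/idP/andP => [/forallP Hmono|[/forallP Hmono /forallP Hle]].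
  split; apply/forallP => i.
    apply/forallP => j; apply/implyP => hij.
    have /forallP/(_ (lift ord_max j)) := Hmono (lift ord_max i).
    by rewrite !ffun_rcons_lift !lift_max hij.
  have /forallP/(_ ord_max) := Hmono (lift ord_max i).
  by rewrite ffun_rcons_lift ffun_rcons_max lift_max /= ltnW.
apply/forallP => i; apply/forallP => j; apply/implyP.
case: (unliftP ord_max i) => [i' ->|->]; case: (unliftP ord_max j) => [j' ->|->];
  rewrite ?ffun_rcons_lift ?ffun_rcons_max ?lift_max //=.
- by move=> hij; have /forallP/(_ j')/implyP := Hmono i'; apply.
- by rewrite leqNgt ltn_ord.
Qed.

Section ChainSum.
Variables (a b N : nat).

Definition chain_weight (j u : nat) : int := ((a + b) * u + a * j)%N%:Z.

Definition bounded_chain {k} (v : nat) (f : {ffun 'I_k -> 'I_N.+1}) : bool :=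
  [forall j, (0 < f j)%N] && nondecreasing_ffun f && [forall j, (f j <= v)%N].

Definition chain_sum (k v : nat) : int :=
  \sum_(f : {ffun 'I_k -> 'I_N.+1} | bounded_chain v f) \prod_(j < k) chain_weight j (f j).

Lemma chain_sum0 v : chain_sum 0 v = 1.
Proof.
rewrite /chain_sum (eq_bigl predT) => [|f]; last first.
  by rewrite /bounded_chain -!andbA; apply/and3P; split; apply/forallP => -[].
under eq_bigr do rewrite big_ord0.
by rewrite sumr_const card_ffun !card_ord.
Qed.

Lemma bounded_chain_rcons k v (u : 'I_N.+1) (f : {ffun 'I_k -> 'I_N.+1}) :
  bounded_chain v (ffun_rcons u f) = (0 < u <= v)%N && bounded_chain u f.
Proof.
rewrite /bounded_chain nondecreasing_ffun_rcons.
rewrite (forall_ffun_rcons (fun x : 'I_N.+1 => (0 < x)%N)).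
rewrite (forall_ffun_rcons (fun x : 'I_N.+1 => (x <= v)%N)) /=.
have [uv|] := leqP u v; last by rewrite !andbF.
have [bnd_u|] := boolP [forall j, (f j <= u)%N]; last by rewrite !andbF.
have -> : [forall j, (f j <= v)%N].
  by apply/forallP => j; exact: leq_trans (forallP bnd_u j) uv.
by case: (0 < u)%N; rewrite !andbT /= ?andbF.
Qed.

Lemma chain_sumS k v :
  chain_sum k.+1 v =
  \sum_(u : 'I_N.+1 | (0 < u <= v)%N) chain_weight k u * chain_sum k u.
Proof.
rewrite /chain_sum; under [in RHS]eq_bigr do rewrite mulr_sumr.
rewrite pair_big_dep /= (reindex _ (onW_bij _ (ffun_rcons_bij _ _))) /=.
apply: eq_big => [[u f]|[u f] _] /=; first exact: bounded_chain_rcons.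
rewrite big_ord_recr /= ffun_rcons_max mulrC; congr (_ * _).
apply: eq_bigr => j _.
have -> : widen_ord (leqnSn k) j = lift ord_max j.
  by apply: val_inj; rewrite /= /bump leqNgt ltn_ord.
by rewrite ffun_rcons_lift.
Qed.

End ChainSum.

Lemma big_ord_nat_range (R : Type) (idx : R) (op : Monoid.law idx) N v (F : nat -> R) :
  (v <= N)%N ->
  \big[op/idx]_(u < N.+1 | (0 < u <= v)%N) F u = \big[op/idx]_(1 <= u < v.+1) F u.
Proof. by move=> hv; rewrite big_geq_mkord (big_ord_widen_cond N.+1). Qed.

Section ChainSumStirling.
Variables (a b : nat) (S : nat -> nat -> int).
Hypothesis HS : is_gen_stirling a%:Z b%:Z S.

Lemma chain_weightS k v : chain_weight a b k v.+1 = b%:Z *+ v.+1 + a%:Z *+ (v + k.+1).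
Proof.
rewrite /chain_weight -[b%:Z *+ _]mulr_natr -[a%:Z *+ _]mulr_natr !natz.
by rewrite -!PoszM -!PoszD; congr Posz; lia.
Qed.

Lemma gen_stirling_diag_sum k v :
  S (v + k.+1)%N v = \sum_(1 <= u < v.+1) chain_weight a b k u * S (u + k)%N u.
Proof.
elim: v => [|v IH]; first by rewrite big_geq // (gen_stirlingS0 HS).
by rewrite big_nat_recr //= -IH addnS (gen_stirlingS HS) addSnnS chain_weightS.
Qed.

Lemma chain_sum_gen_stirling N k v : (v <= N)%N -> chain_sum a b N k v = S (v + k)%N v.
Proof.
elim: k v => [|k IH] v hv; first by rewrite chain_sum0 addn0 (gen_stirling_diag HS).
rewrite chain_sumS gen_stirling_diag_sum -(big_ord_nat_range _ _ hv).
by apply: eq_bigr => u /andP [_ uv]; rewrite IH // (leq_trans uv hv).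
Qed.

End ChainSumStirling.

Theorem theorem6 (n k a b : nat) (S : nat -> nat -> int) :
  is_gen_stirling a%:Z b%:Z S ->
  S (n + k)%N n =
  \sum_(f : {ffun 'I_k -> 'I_n.+1} |
          [forall j, (0 < f j)%N] && [forall i : 'I_k, forall j : 'I_k, (i <= j)%N ==> (f i <= f j)%N])
     \prod_(j < k) (((a + b) * f j + a * j)%N)%:Z.
Proof.
move=> HS; rewrite -(chain_sum_gen_stirling HS k (leqnn n)).
apply: eq_bigl => f; rewrite /bounded_chain.
suff -> : [forall j, (f j <= n)%N] by rewrite andbT.
by apply/forallP => j; rewrite -ltnS ltn_ord.
Qed.
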